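(* Let $\mathcal{C}=D^{E}\cup A\cup B$ with $D^E=\{0_20_2\rhd\to0_2\rhd,\ 1_20_2\rhd\to1_2\rhd,\ 1_2\rhd\to2_30_2\rhd\}$ and $\mathcal{T}=D^O\cup A\cup B$ with $D^O=\{0_2\rhd\to\rhd,\ 0_21_2\rhd\to1_30_2\rhd,\ 1_21_2\rhd\to2_31_2\rhd\}$. Then: (1) $\mathcal{C}\setminus\{0_20_2\rhd\to0_2\rhd\}$ is terminating iff every nonconvergent Collatz trajectory contains some $n\equiv0\pmod4$; (2) $\mathcal{C}\setminus\{1_20_2\rhd\to1_2\rhd\}$ is terminating iff every nonconvergent Collatz trajectory contains some $n\equiv2\pmod4$; (3) $\mathcal{T}\setminus\{0_21_2\rhd\to1_30_2\rhd\}$ is terminating iff every nonconvergent Collatz trajectory contains some $n\equiv1\pmod4$; (4) $\mathcal{T}\setminus\{1_21_2\rhd\to2_31_2\rhd\}$ is terminating iff every nonconvergent Collatz trajectory contains some $n\equiv3\pmod4$.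
   Context: $C:\mathbb{N}^+\to\mathbb{N}^+$ is the Collatz function $C(n)=n/2$ ($n$ even), $3n+1$ ($n$ odd); the Collatz trajectory of $n$ is $(n,C(n),C^2(n),\dots)$ and is nonconvergent if it does not contain $1$. An SRS induces $u\ell v\to urv$; terminating means no infinite rewrite sequence. Alphabet $\{0_2,1_2,0_3,1_3,2_3,\lhd,\rhd\}$; $A=\{0_20_3\to0_30_2,\ 0_21_3\to0_31_2,\ 0_22_3\to1_30_2,\ 1_20_3\to1_31_2,\ 1_21_3\to2_30_2,\ 1_22_3\to2_31_2\}$; $B=\{\lhd0_3\to\lhd1_2,\ \lhd1_3\to\lhd0_20_2,\ \lhd2_3\to\lhd0_21_2\}$. *)

From Stdlib Require Import List Arith PeanoNat.
Import ListNotations.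

(** Collatz function on positive naturals (we work in nat; only n >= 1 is used). *)
Definition collatz (n : nat) : nat :=
  if Nat.even n then n / 2 else 3 * n + 1.

Definition traj (n k : nat) : nat := Nat.iter k collatz n.

Definition nonconvergent (n : nat) : Prop := forall k, traj n k <> 1.

Definition every_nonconv_hits (r : nat) : Prop :=
  forall n, 1 <= n -> nonconvergent n -> exists k, traj n k mod 4 = r.

(** Alphabet {0_2,1_2,0_3,1_3,2_3,<|,|>}. *)
Inductive sym : Type := z2 | o2 | z3 | o3 | t3 | lhd | rhd.

Definition sym_eq_dec : forall a b : sym, {a = b} + {a <> b}.
Proof. decide equality. Defined.

Definition word := list sym.
Definition rule := (word * word)%type.
Definition srs := list rule.

Definition rule_eq_dec : forall a b : rule, {a = b} + {a <> b}.
Proof.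
  intros [l1 r1] [l2 r2].
  destruct (list_eq_dec sym_eq_dec l1 l2); destruct (list_eq_dec sym_eq_dec r1 r2);
    subst; try (left; reflexivity); right; congruence.
Defined.

Definition step (R : srs) (x y : word) : Prop :=
  exists u v l r, In (l, r) R /\ x = u ++ l ++ v /\ y = u ++ r ++ v.

Definition terminating (R : srs) : Prop :=
  ~ exists f : nat -> word, forall i, step R (f i) (f (S i)).

Definition srs_remove (R : srs) (rho : rule) : srs :=
  filter (fun r => if rule_eq_dec r rho then false else true) R.

Definition A_rules : srs :=
  [ ([z2; z3], [z3; z2]);
    ([z2; o3], [z3; o2]);
    ([z2; t3], [o3; z2]);
    ([o2; z3], [o3; o2]);
    ([o2; o3], [t3; z2]);
    ([o2; t3], [t3; o2]) ].

Definition B_rules : srs :=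
  [ ([lhd; z3], [lhd; o2]);
    ([lhd; o3], [lhd; z2; z2]);
    ([lhd; t3], [lhd; z2; o2]) ].

Definition DE1 : rule := ([z2; z2; rhd], [z2; rhd]).
Definition DE2 : rule := ([o2; z2; rhd], [o2; rhd]).
Definition DE3 : rule := ([o2; rhd], [t3; z2; rhd]).
Definition DE_rules : srs := [DE1; DE2; DE3].

Definition DO1 : rule := ([z2; rhd], [rhd]).
Definition DO2 : rule := ([z2; o2; rhd], [o3; z2; rhd]).
Definition DO3 : rule := ([o2; o2; rhd], [t3; o2; rhd]).
Definition DO_rules : srs := [DO1; DO2; DO3].

Definition C_srs : srs := DE_rules ++ A_rules ++ B_rules.
Definition T_srs : srs := DO_rules ++ A_rules ++ B_rules.

From Stdlib Require Import List Arith PeanoNat Lia Wf_nat Relation_Operators.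
From Stdlib Require Import Classical ClassicalEpsilon.
Import ListNotations.

(* A word  ⊲ q ⊳  whose letters are binary digits 0_2,1_2 and ternary digits
   0_3,1_3,2_3 denotes the mixed-radix number obtained from 1 by reading q from
   left to right (a binary digit b maps x to 2x+b, a ternary digit t to 3x+t).
   The A-rules swap a binary digit past a ternary digit and the B-rules absorb a
   ternary digit into ⊲; both preserve this value.  Each of the four systems is
   D ++ A ++ B, where every rule of D rewrites the end  l0 ⊳  of a word into
   r0 ⊳, replaces the value n by C^k(n) for some k >= 1, and never passes
   through a "stop" (1 or a number congruent to ρ mod 4).  The proof is generic
   in such a D:
   - (<-) If every trajectory reaches a stop, every word is strongly
     normalising.  Rewriting never crosses ⊳ or ⊲, so a word splits at its
     first ⊳ and at the last ⊲ before it; the pieces are handled by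
     lexicographic measures (number of ternary digits, inversions), and for
     ⊲ q ⊳ additionally by the number of Collatz steps left before a stop.
   - (->) If D can rewrite every binary word whose value avoids stops, then
     from ⊲ bin(n) ⊳, with n a nonconvergent number avoiding ρ, one reaches
     (after absorbing the produced ternary digit) the binary word of a later
     trajectory element: an infinite rewrite sequence.
   The theorem follows by checking these two properties for the four D's. *)

(** * Words: letter classes, counting, values *)

Definition isbin (c : sym) : bool := match c with z2 | o2 => true | _ => false end.
Definition istern (c : sym) : bool := match c with z3 | o3 | t3 => true | _ => false end.
Definition isl (c : sym) : bool := match c with lhd => true | _ => false end.
Definition isr (c : sym) : bool := match c with rhd => true | _ => false end.

Lemma isl_eq (c : sym) : isl c = true -> c = lhd.
Proof. destruct c; simpl; congruence. Qed.

Lemma isr_eq (c : sym) : isr c = true -> c = rhd.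
Proof. destruct c; simpl; congruence. Qed.

Fixpoint cnt (p : sym -> bool) (w : word) : nat :=
  match w with [] => 0 | c :: w' => (if p c then 1 else 0) + cnt p w' end.

Lemma cnt_app (p : sym -> bool) (x y : word) : cnt p (x ++ y) = cnt p x + cnt p y.
Proof. induction x as [|c x IH]; simpl; [reflexivity | rewrite IH; lia]. Qed.

Ltac counts := rewrite ?cnt_app in *; simpl in *; lia.

Ltac word_eq := simpl; repeat (rewrite <- ?app_assoc; simpl); reflexivity.

Definition unmarked (w : word) : Prop := cnt isl w = 0 /\ cnt isr w = 0.

Definition bins (q : word) : Prop := Forall (fun c => isbin c = true) q.

(** Inversions: pairs (binary digit, later ternary digit); A-rules remove one. *)
Fixpoint inv (w : word) : nat :=
  match w with
  | [] => 0
  | c :: w' => (if isbin c then cnt istern w' else 0) + inv w'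
  end.

Lemma inv_app (x y : word) : inv (x ++ y) = inv x + inv y + cnt isbin x * cnt istern y.
Proof. induction x as [|c x IH]; simpl; [lia | rewrite IH, cnt_app; destruct (isbin c); lia]. Qed.

Lemma inv_context (u v l r : word) :
  cnt istern l = cnt istern r -> cnt isbin l = cnt isbin r -> inv r < inv l ->
  inv (u ++ r ++ v) < inv (u ++ l ++ v).
Proof. intros Ht Hb Hi. rewrite !inv_app, !cnt_app, Ht, Hb. lia. Qed.

Definition dstep (acc : nat) (c : sym) : nat :=
  match c with
  | z2 => 2 * acc | o2 => 2 * acc + 1
  | z3 => 3 * acc | o3 => 3 * acc + 1 | t3 => 3 * acc + 2
  | lhd => 1 | rhd => acc
  end.

Definition wval (acc : nat) (w : word) : nat := fold_left dstep w acc.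

Lemma wval_app (acc : nat) (x y : word) : wval acc (x ++ y) = wval (wval acc x) y.
Proof. apply fold_left_app. Qed.

Lemma wval_pos (w : word) (acc : nat) : 1 <= acc \/ 1 <= cnt isl w -> 1 <= wval acc w.
Proof.
  revert acc; induction w as [|c w IH]; intros acc H; simpl in *; [lia|].
  apply IH; destruct c; simpl in *; lia.
Qed.

Lemma wval_context (acc : nat) (u v l r : word) :
  (forall a, wval a l = wval a r) -> wval acc (u ++ r ++ v) = wval acc (u ++ l ++ v).
Proof. intros H. rewrite !wval_app, H. reflexivity. Qed.

(** Every n >= 1 is the value of a binary word (its binary expansion without
    the leading 1). *)
Lemma binary_encoding (n : nat) : 1 <= n -> exists q, bins q /\ wval 1 q = n.
Proof.
  induction n as [n IH] using lt_wf_ind. intros Hn.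
  destruct (Nat.eq_dec n 1) as [->|Hn1]; [exists []; split; [constructor | reflexivity]|].
  destruct (Nat.Even_or_Odd n) as [[k ->]|[k ->]];
    destruct (IH k ltac:(lia) ltac:(lia)) as [q [Hq Hv]].
  - exists (q ++ [z2]). split; [apply Forall_app; auto|]. rewrite wval_app, Hv. reflexivity.
  - exists (q ++ [o2]). split; [apply Forall_app; auto|]. rewrite wval_app, Hv. reflexivity.
Qed.

(** Weight of the end of a word: 0 if it ends with 0_2, else 1.  Together
    with the binary digits it measures words x ⊳ without ⊲. *)
Definition end_weight (x : word) : nat := match rev x with z2 :: _ => 0 | _ => 1 end.

Lemma end_weight_le (x : word) : end_weight x <= 1.
Proof. unfold end_weight. destruct (rev x) as [|[] _]; auto. Qed.

Lemma end_weight_z2 (x : word) : end_weight (x ++ [z2]) = 0.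
Proof. unfold end_weight. rewrite rev_app_distr. reflexivity. Qed.

Lemma end_weight_o2 (x : word) : end_weight (x ++ [o2]) = 1.
Proof. unfold end_weight. rewrite rev_app_distr. reflexivity. Qed.

Lemma end_weight_swap (u v : word) (b t c d : sym) :
  istern t = true -> end_weight (u ++ [c; d] ++ v) <= end_weight (u ++ [b; t] ++ v).
Proof.
  intros Ht. unfold end_weight. rewrite !rev_app_distr. simpl.
  destruct (rev v) as [|x rv]; simpl.
  - destruct t; try discriminate; destruct d; auto.
  - destruct x; auto.
Qed.

Lemma first_split (p : sym -> bool) (a : sym) (w : word) :
  (forall c, p c = true -> c = a) -> 1 <= cnt p w ->
  exists x y, w = x ++ a :: y /\ cnt p x = 0.
Proof.
  intros Hp. induction w as [|c w IH]; simpl; intros H; [lia|].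
  destruct (p c) eqn:E.
  - apply Hp in E; subst. exists [], w; auto.
  - destruct (IH H) as [x [y [-> Hx]]]. exists (c :: x), y. simpl; rewrite E; auto.
Qed.

Lemma last_split (p : sym -> bool) (a : sym) (w : word) :
  (forall c, p c = true -> c = a) -> 1 <= cnt p w ->
  exists x y, w = x ++ a :: y /\ cnt p y = 0.
Proof.
  intros Hp. induction w as [|c w IH]; simpl; intros H; [lia|].
  destruct (Nat.le_gt_cases 1 (cnt p w)) as [H1|H1].
  - destruct (IH H1) as [x [y [-> Hy]]]. exists (c :: x), y; auto.
  - destruct (p c) eqn:E; [|lia]. apply Hp in E; subst. exists [], w; split; auto; lia.
Qed.

Lemma first_occ (p : sym -> bool) (a : sym) : p a = true ->
  forall p1 p2 q1 q2, cnt p p1 = 0 -> cnt p p2 = 0 ->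
  p1 ++ a :: q1 = p2 ++ a :: q2 -> p1 = p2 /\ q1 = q2.
Proof.
  intros Ha. induction p1 as [|c p1 IH]; intros [|c' p2] q1 q2 H1 H2 E; simpl in *;
    inversion E; subst; auto.
  - rewrite Ha in H2; lia.
  - rewrite Ha in H1; lia.
  - destruct (p c'); [lia|]. destruct (IH p2 q1 q2) as [-> ->]; auto.
Qed.

Lemma last_occ (p : sym -> bool) (a : sym) : p a = true ->
  forall p1 p2 q1 q2, cnt p q1 = 0 -> cnt p q2 = 0 ->
  p1 ++ a :: q1 = p2 ++ a :: q2 -> p1 = p2 /\ q1 = q2.
Proof.
  intros Ha. induction p1 as [|c p1 IH]; intros [|c' p2] q1 q2 H1 H2 E; simpl in *;
    inversion E; subst; auto.
  - rewrite cnt_app in H1; simpl in H1; rewrite Ha in H1; lia.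
  - rewrite cnt_app in H2; simpl in H2; rewrite Ha in H2; lia.
  - destruct (IH p2 q1 q2) as [-> ->]; auto.
Qed.

(** * Rewriting: strong normalisation and infinite sequences *)

Lemma step_intro (R : srs) (l r u v x y : word) :
  In (l, r) R -> x = u ++ l ++ v -> y = u ++ r ++ v -> step R x y.
Proof. intros; exists u, v, l, r; auto. Qed.

Definition sn (R : srs) (w : word) : Prop := Acc (fun z x => step R x z) w.

Lemma terminating_of_sn (R : srs) : (forall w, sn R w) -> terminating R.
Proof.
  intros Hsn [f Hf].
  assert (Hacc : forall w, sn R w -> forall g, g 0 = w -> (forall i, step R (g i) (g (S i))) -> False).
  { intros w Hw. induction Hw as [w _ IH]. intros g <- Hg.
    apply (IH (g 1) (Hg 0) (fun i => g (S i))); auto. }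
  exact (Hacc (f 0) (Hsn _) f eq_refl Hf).
Qed.

Lemma not_terminating_of_progress (R : srs) (Q : word -> Prop) :
  (forall w, Q w -> exists w1 w2, step R w w1 /\ clos_refl_trans_1n _ (step R) w1 w2 /\ Q w2) ->
  forall w0, Q w0 -> ~ terminating R.
Proof.
  intros Hprog w0 H0 Hterm.
  set (Q' := fun w => exists w', clos_refl_trans_1n _ (step R) w w' /\ Q w').
  assert (Hnext : forall w, Q' w -> exists w', step R w w' /\ Q' w').
  { intros w [w' [Hs Hq]]. destruct Hs as [| y w' Hwy Hyw'].
    - destruct (Hprog w Hq) as [w1 [w2 [H1 [H2 H3]]]]. exists w1; split; [|exists w2]; auto.
    - exists y. split; [|exists w']; auto. }
  assert (Hchoice : forall w, {w' | Q' w -> step R w w' /\ Q' w'}).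
  { intros w. apply constructive_indefinite_description.
    destruct (classic (Q' w)) as [Hw|Hw].
    - destruct (Hnext w Hw) as [w' Hw']. exists w'; auto.
    - exists w; contradiction. }
  set (f := fun i => Nat.iter i (fun w => proj1_sig (Hchoice w)) w0).
  assert (HQ : forall i, Q' (f i)).
  { induction i as [|i IH]; [exists w0; split; [constructor | exact H0]|].
    exact (proj2 (proj2_sig (Hchoice (f i)) IH)). }
  apply Hterm. exists f. intros i. exact (proj1 (proj2_sig (Hchoice (f i)) (HQ i))).
Qed.

Definition lex_lt {X : Type} (f g : X -> nat) (y x : X) : Prop :=
  f y < f x \/ (f y = f x /\ g y < g x).

Lemma lex_ind {X : Type} (f g : X -> nat) (Q : X -> Prop) :
  (forall x, (forall y, lex_lt f g y x -> Q y) -> Q x) -> forall x, Q x.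
Proof.
  intros H. assert (H0 : forall n m x, f x = n -> g x = m -> Q x).
  { intro n. induction n as [n IHn] using lt_wf_ind. intro m.
    induction m as [m IHm] using lt_wf_ind.
    intros x Hf Hg. apply H. intros y [Hy|[Hy1 Hy2]].
    - apply (IHn (f y)) with (m := g y); lia.
    - apply (IHm (g y)); lia. }
  intros x; eapply H0; reflexivity.
Qed.

Lemma sn_by_lex_measure (R : srs) {X : Type} (emb : X -> word) (P : X -> Prop)
    (f g : X -> nat) :
  (forall x z, P x -> step R (emb x) z ->
     sn R z \/ exists y, z = emb y /\ P y /\ lex_lt f g y x) ->
  forall x, P x -> sn R (emb x).
Proof.
  intros Hstep. apply (lex_ind f g (fun x => P x -> sn R (emb x))).
  intros x IH Hx. constructor. intros z Hz.
  destruct (Hstep x z Hx Hz) as [Hsn | [y [-> [Hy Hlt]]]]; [exact Hsn | exact (IH y Hlt Hy)].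
Qed.

(** * Locality: rewriting never crosses the markers *)

Definition rhd_local (R : srs) : Prop :=
  forall l r, In (l, r) R ->
    (cnt isr l = 0 /\ cnt isr r = 0) \/
    (exists l0 r0, l = l0 ++ [rhd] /\ r = r0 ++ [rhd] /\ cnt isr l0 = 0 /\ cnt isr r0 = 0).

Definition lhd_local (R : srs) : Prop :=
  forall l r, In (l, r) R ->
    (cnt isl l = 0 /\ cnt isl r = 0) \/
    (exists l0 r0, l = lhd :: l0 /\ r = lhd :: r0 /\ cnt isl l0 = 0 /\ cnt isl r0 = 0).

Definition rhd_step (R : srs) (x x' : word) : Prop :=
  (exists u l0 r0, In (l0 ++ [rhd], r0 ++ [rhd]) R /\ x = u ++ l0 /\ x' = u ++ r0) \/
  (exists u v l r, In (l, r) R /\ cnt isr l = 0 /\ x = u ++ l ++ v /\ x' = u ++ r ++ v).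

Lemma rhd_step_step (R : srs) (x x' : word) :
  rhd_step R x x' -> step R (x ++ [rhd]) (x' ++ [rhd]).
Proof.
  intros [[u [l0 [r0 [Hin [-> ->]]]]] | [u [v [l [r [Hin [_ [-> ->]]]]]]]].
  - apply (step_intro R (l0 ++ [rhd]) (r0 ++ [rhd]) u []); auto; word_eq.
  - apply (step_intro R l r u (v ++ [rhd])); auto; word_eq.
Qed.

Lemma step_split_rhd (R : srs) (x y z : word) :
  rhd_local R -> cnt isr x = 0 -> step R (x ++ rhd :: y) z ->
  (exists x', cnt isr x' = 0 /\ z = x' ++ rhd :: y /\ rhd_step R x x') \/
  (exists y', z = x ++ rhd :: y' /\ step R y y').
Proof.
  intros HR Hx [u [v [l [r [Hin [Hw ->]]]]]].
  destruct (Nat.eq_dec (cnt isr u) 0) as [Hu|Hu].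
  - destruct (HR _ _ Hin) as [[Hl Hr] | [l0 [r0 [-> [-> [Hl0 Hr0]]]]]].
    + assert (Hv : 1 <= cnt isr v) by (apply (f_equal (cnt isr)) in Hw; counts).
      destruct (first_split isr rhd v isr_eq Hv) as [v1 [v2 [-> Hv1]]].
      assert (E : (u ++ l ++ v1) ++ rhd :: v2 = x ++ rhd :: y) by (rewrite Hw; word_eq).
      apply (first_occ isr rhd eq_refl) in E as [<- <-]; [|counts|exact Hx].
      left. exists (u ++ r ++ v1). split; [counts|]. split; [word_eq|].
      right. exists u, v1, l, r. auto.
    + assert (E : (u ++ l0) ++ rhd :: v = x ++ rhd :: y) by (rewrite Hw; word_eq).
      apply (first_occ isr rhd eq_refl) in E as [<- <-]; [|counts|exact Hx].
      left. exists (u ++ r0). split; [counts|]. split; [word_eq|].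
      left. exists u, l0, r0. auto.
  - destruct (first_split isr rhd u isr_eq ltac:(lia)) as [u1 [u2 [-> Hu1]]].
    assert (E : u1 ++ rhd :: (u2 ++ l ++ v) = x ++ rhd :: y) by (rewrite Hw; word_eq).
    apply (first_occ isr rhd eq_refl) in E as [<- <-]; auto.
    right. exists (u2 ++ r ++ v). split; [word_eq|]. exists u2, v, l, r. auto.
Qed.

Lemma step_split_lhd (R : srs) (p s z : word) :
  lhd_local R -> cnt isl s = 0 -> step R (p ++ lhd :: s) z ->
  (exists p', z = p' ++ lhd :: s /\ step R p p') \/
  (exists s', cnt isl s' = 0 /\ z = p ++ lhd :: s' /\ step R (lhd :: s) (lhd :: s')).
Proof.
  intros HR Hs [u [v [l [r [Hin [Hw ->]]]]]].
  destruct (Nat.eq_dec (cnt isl v) 0) as [Hv|Hv].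
  - destruct (HR _ _ Hin) as [[Hl Hr] | [l0 [r0 [-> [-> [Hl0 Hr0]]]]]].
    + assert (Hu : 1 <= cnt isl u) by (apply (f_equal (cnt isl)) in Hw; counts).
      destruct (last_split isl lhd u isl_eq Hu) as [u1 [u2 [-> Hu2]]].
      assert (E : u1 ++ lhd :: (u2 ++ l ++ v) = p ++ lhd :: s) by (rewrite Hw; word_eq).
      apply (last_occ isl lhd eq_refl) in E as [<- <-]; [|counts|exact Hs].
      right. exists (u2 ++ r ++ v). split; [counts|]. split; [word_eq|].
      exists (lhd :: u2), v, l, r. auto.
    + assert (E : u ++ lhd :: (l0 ++ v) = p ++ lhd :: s) by (rewrite Hw; word_eq).
      apply (last_occ isl lhd eq_refl) in E as [<- <-]; [|counts|exact Hs].
      right. exists (r0 ++ v). split; [counts|]. split; [word_eq|].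
      exists [], v, (lhd :: l0), (lhd :: r0). auto.
  - destruct (last_split isl lhd v isl_eq ltac:(lia)) as [v1 [v2 [-> Hv2]]].
    assert (E : (u ++ l ++ v1) ++ lhd :: v2 = p ++ lhd :: s) by (rewrite Hw; word_eq).
    apply (last_occ isl lhd eq_refl) in E as [<- <-]; auto.
    left. exists (u ++ r ++ v1). split; [word_eq|]. exists u, v1, l, r. auto.
Qed.

Lemma sn_app_rhd (R : srs) (x y : word) :
  rhd_local R -> cnt isr x = 0 -> sn R (x ++ [rhd]) -> sn R y -> sn R (x ++ rhd :: y).
Proof.
  intros HR Hx Hxs. unfold sn in *. remember (x ++ [rhd]) as w eqn:Ew.
  revert x Ew Hx y. induction Hxs as [w _ IHw]. intros x -> Hx y Hy.
  induction Hy as [y Hy IHy]. constructor. intros z Hz.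
  destruct (step_split_rhd R x y z HR Hx Hz) as [[x' [Hx' [-> Hs]]] | [y' [-> Hs]]].
  - apply (IHw (x' ++ [rhd])); auto using rhd_step_step. constructor; exact Hy.
  - apply IHy; exact Hs.
Qed.

Lemma sn_app_lhd (R : srs) (p s : word) :
  lhd_local R -> sn R p -> cnt isl s = 0 -> sn R (lhd :: s) -> sn R (p ++ lhd :: s).
Proof.
  intros HR Hp. unfold sn in *. revert s. induction Hp as [p Hp IHp]. intros s Hs Hw.
  remember (lhd :: s) as w eqn:Ew. revert s Ew Hs.
  induction Hw as [w Hw IHw]. intros s -> Hs. constructor. intros z Hz.
  destruct (step_split_lhd R p s z HR Hs Hz) as [[p' [-> Hst]] | [s' [Hs' [-> Hst]]]].
  - apply (IHp p' Hst s Hs). constructor; exact Hw.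
  - exact (IHw (lhd :: s') Hst s' eq_refl Hs').
Qed.

(** * The rules A and B *)

Ltac rule_cases H :=
  simpl in H; repeat destruct H as [H|H]; try contradiction; inversion H; subst.

Lemma A_rule_props (l r : word) : In (l, r) A_rules ->
  unmarked l /\ unmarked r /\ cnt istern l = cnt istern r /\
  cnt isbin l = cnt isbin r /\ inv r < inv l.
Proof. intros H; rule_cases H; repeat split; simpl; lia. Qed.

Lemma A_rule_shape (l r : word) : In (l, r) A_rules ->
  exists b t c d, l = [b; t] /\ r = [c; d] /\ istern t = true.
Proof. intros H; rule_cases H; do 4 eexists; eauto. Qed.

Lemma B_rule_props (l r : word) : In (l, r) B_rules ->
  (exists l0 r0, l = lhd :: l0 /\ r = lhd :: r0 /\ cnt isl l0 = 0 /\ cnt isl r0 = 0) /\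
  cnt isr l = 0 /\ cnt isr r = 0 /\ cnt istern r < cnt istern l.
Proof. intros H; rule_cases H; repeat split; simpl; try lia; do 2 eexists; eauto. Qed.

Lemma AB_value (l r : word) : In (l, r) A_rules \/ In (l, r) B_rules ->
  forall a, wval a l = wval a r.
Proof. intros [H|H]; rule_cases H; intros a; unfold wval; simpl; lia. Qed.

Lemma AB_step_decreases (u v l r : word) : In (l, r) A_rules \/ In (l, r) B_rules ->
  lex_lt (cnt istern) inv (u ++ r ++ v) (u ++ l ++ v).
Proof.
  intros [H|H].
  - destruct (A_rule_props l r H) as [_ [_ [Ht [Hb Hi]]]].
    right. split; [counts | apply inv_context; auto].
  - destruct (B_rule_props l r H) as [_ [_ [_ Ht]]]. left. counts.
Qed.

Lemma A_step_end_measure (u v l r : word) : In (l, r) A_rules ->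
  lex_lt (fun x => 2 * cnt isbin x + end_weight x) inv (u ++ r ++ v) (u ++ l ++ v).
Proof.
  intros H. destruct (A_rule_props l r H) as [_ [_ [Ht [Hb Hi]]]].
  destruct (A_rule_shape l r H) as [b [t [c [d [-> [-> Htt]]]]]].
  pose proof (end_weight_swap u v b t c d Htt).
  pose proof (inv_context u v [b; t] [c; d] Ht Hb Hi).
  unfold lex_lt. rewrite !cnt_app, Hb. lia.
Qed.

Lemma A_cover (b t : sym) : isbin b = true -> istern t = true -> exists c d,
  In ([b; t], [c; d]) A_rules /\ istern c = true /\ isbin d = true /\
  forall a, wval a [b; t] = wval a [c; d].
Proof.
  destruct b, t; simpl; intros; try discriminate;
    (do 2 eexists; split; [simpl; tauto|]); repeat split; intros; unfold wval; simpl; lia.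
Qed.

Lemma B_cover (t : sym) : istern t = true -> exists s,
  In ([lhd; t], lhd :: s) B_rules /\ bins s /\ wval 1 s = wval 1 [t].
Proof.
  destruct t; simpl; intros; try discriminate;
    (eexists; split; [simpl; tauto|]); split; try reflexivity; repeat constructor.
Qed.

Lemma absorb_ternary (R : srs) : incl A_rules R -> incl B_rules R ->
  forall p t s, bins p -> istern t = true -> bins s ->
  exists q, bins q /\ wval 1 q = wval 1 (p ++ t :: s) /\
    clos_refl_trans_1n _ (step R) (lhd :: p ++ t :: s ++ [rhd]) (lhd :: q ++ [rhd]).
Proof.
  intros HA HB p. induction p as [|b p IH] using rev_ind; intros t s Hp Ht Hs.
  - destruct (B_cover t Ht) as [s' [Hin [Hs' Hv]]].
    exists (s' ++ s). split; [apply Forall_app; auto|].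
    split; [rewrite wval_app, Hv; reflexivity|].
    eapply rt1n_trans; [|apply rt1n_refl].
    apply (step_intro R [lhd; t] (lhd :: s') [] (s ++ [rhd])); auto; word_eq.
  - apply Forall_app in Hp as [Hp Hb]. inversion Hb as [|? ? Hb1 _]; subst.
    destruct (A_cover b t Hb1 Ht) as [c [d [Hin [Hc [Hd Hv]]]]].
    destruct (IH c (d :: s) Hp Hc (Forall_cons _ Hd Hs)) as [q [Hq [Hqv Hst]]].
    exists q. split; [exact Hq|]. split.
    + rewrite Hqv. replace ((p ++ [b]) ++ t :: s) with (p ++ [b; t] ++ s) by word_eq.
      replace (p ++ c :: d :: s) with (p ++ [c; d] ++ s) by word_eq.
      apply wval_context. exact Hv.
    + eapply rt1n_trans; [|exact Hst].
      apply (step_intro R [b; t] [c; d] (lhd :: p) (s ++ [rhd])); auto; word_eq.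
Qed.

(** * Right-end rules simulating the Collatz map *)

Definition stop (rho n : nat) : Prop := n = 1 \/ n mod 4 = rho.

Definition avoids (rho n : nat) : Prop := forall j, ~ stop rho (traj n j).

Lemma traj_add (n i k : nat) : traj (traj n k) i = traj n (i + k).
Proof. unfold traj. rewrite Nat.iter_add. reflexivity. Qed.

Definition simulates (rho : nat) (l0 r0 : word) : Prop :=
  forall a, 1 <= a -> exists k, 1 <= k /\ wval a r0 = traj (wval a l0) k /\
    forall j, j < k -> ~ stop rho (traj (wval a l0) j).

Definition shrinks (l0 r0 : word) : Prop :=
  cnt isbin r0 < cnt isbin l0 \/
  (cnt isbin r0 = cnt isbin l0 /\ (exists l1, l0 = l1 ++ [o2]) /\ (exists r1, r0 = r1 ++ [z2])).

Definition right_end_rule (rho : nat) (lr : rule) : Prop :=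
  exists l0 r0, lr = (l0 ++ [rhd], r0 ++ [rhd]) /\ unmarked l0 /\ unmarked r0 /\
    shrinks l0 r0 /\ simulates rho l0 r0.

Lemma shrinks_end_measure (u l0 r0 : word) : shrinks l0 r0 ->
  lex_lt (fun x => 2 * cnt isbin x + end_weight x) inv (u ++ r0) (u ++ l0).
Proof.
  intros [Hb | [Hb [[l1 ->] [r1 ->]]]]; left.
  - pose proof (end_weight_le (u ++ r0)). pose proof (end_weight_le (u ++ l0)). counts.
  - rewrite !app_assoc, end_weight_z2, end_weight_o2. counts.
Qed.

Definition system (D : srs) : srs := D ++ A_rules ++ B_rules.

Lemma system_incl_A (D : srs) : incl A_rules (system D).
Proof. intros x Hx. apply in_or_app; right; apply in_or_app; auto. Qed.

Lemma system_incl_B (D : srs) : incl B_rules (system D).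
Proof. intros x Hx. apply in_or_app; right; apply in_or_app; auto. Qed.

(** * Strong normalisation when every trajectory reaches a stop *)

Section Termination.

Variables (rho : nat) (D : srs).
Hypothesis HD : Forall (right_end_rule rho) D.

Lemma system_cases (l r : word) : In (l, r) (system D) ->
  right_end_rule rho (l, r) \/ In (l, r) A_rules \/ In (l, r) B_rules.
Proof.
  intros H. apply in_app_or in H as [H|H].
  - left. exact (proj1 (Forall_forall _ _) HD _ H).
  - right. apply in_app_or. exact H.
Qed.

Lemma system_rhd_local : rhd_local (system D).
Proof.
  intros l r Hin. destruct (system_cases l r Hin) as [[l0 [r0 [E [[_ Hl] [[_ Hr] _]]]]] | [HA|HB]].
  - injection E as -> ->. right. eauto 7.
  - left. apply A_rule_props in HA as [[_ ?] [[_ ?] _]]. auto.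
  - left. apply B_rule_props in HB as [_ [? [? _]]]. auto.
Qed.

Lemma system_lhd_local : lhd_local (system D).
Proof.
  intros l r Hin. destruct (system_cases l r Hin) as [[l0 [r0 [E [[Hl _] [[Hr _] _]]]]] | [HA|HB]].
  - injection E as -> ->. left. counts.
  - left. apply A_rule_props in HA as [[? _] [[? _] _]]. auto.
  - right. apply B_rule_props in HB as [? _]. exact H.
Qed.

Lemma no_step_from_nil (y : word) : ~ step (system D) [] y.
Proof.
  intros [u [v [l [r [Hin [Hw _]]]]]]. symmetry in Hw.
  apply app_eq_nil in Hw as [_ Hw]. apply app_eq_nil in Hw as [-> _].
  destruct (system_cases [] r Hin) as [[l0 [r0 [E _]]] | [H|H]];
    [injection E as E; destruct l0; discriminate | rule_cases H | rule_cases H].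
Qed.

Lemma step_before_rhd (x z : word) : cnt isr x = 0 -> step (system D) (x ++ [rhd]) z ->
  (exists u l0 r0, x = u ++ l0 /\ z = (u ++ r0) ++ [rhd] /\ unmarked l0 /\ unmarked r0 /\
     shrinks l0 r0 /\ simulates rho l0 r0) \/
  (exists u v l r, x = u ++ l ++ v /\ z = (u ++ r ++ v) ++ [rhd] /\
     (In (l, r) A_rules \/ In (l, r) B_rules)).
Proof.
  intros Hx Hz.
  destruct (step_split_rhd _ x [] z system_rhd_local Hx Hz) as [[x' [_ [-> Hs]]] | [y' [_ Hs]]];
    [| exfalso; exact (no_step_from_nil y' Hs)].
  destruct Hs as [[u [l0 [r0 [Hin [-> ->]]]]] | [u [v [l [r [Hin [Hl [-> ->]]]]]]]].
  - destruct (system_cases _ _ Hin) as [[l1 [r1 [E [Hl1 [Hr1 Hrest]]]]] | HAB].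
    + injection E as E1 E2. apply app_inj_tail in E1 as [<- _].
      apply app_inj_tail in E2 as [<- _]. left. exists u, l0, r0. auto.
    + exfalso. destruct HAB as [HA|HB];
        [apply A_rule_props in HA as [[_ Hr] _] | apply B_rule_props in HB as [_ [Hr _]]];
        counts.
  - destruct (system_cases _ _ Hin) as [[l1 [r1 [E _]]] | HAB].
    + injection E as -> _. counts.
    + right. exists u, v, l, r. auto.
Qed.

(** Words without ⊳: only A and B apply. *)
Lemma sn_without_rhd (w : word) : cnt isr w = 0 -> sn (system D) w.
Proof.
  revert w. apply (sn_by_lex_measure _ (fun w => w) (fun w => cnt isr w = 0) (cnt istern) inv).
  intros w z Hw [u [v [l [r [Hin [-> ->]]]]]]. right. exists (u ++ r ++ v).
  split; [reflexivity|].
  destruct (system_cases l r Hin) as [[l0 [r0 [E _]]] | HAB].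
  - injection E as -> ->. counts.
  - split; [|apply AB_step_decreases; exact HAB].
    destruct HAB as [HA|HB].
    + apply A_rule_props in HA as [[_ ?] [[_ ?] _]]. counts.
    + apply B_rule_props in HB as [_ [? [? _]]]. counts.
Qed.

(** Words x ⊳ without ⊲: the binary digits (plus end weight) cannot grow. *)
Lemma sn_unmarked_rhd (x : word) : unmarked x -> sn (system D) (x ++ [rhd]).
Proof.
  revert x.
  apply (sn_by_lex_measure _ (fun x => x ++ [rhd]) unmarked
           (fun x => 2 * cnt isbin x + end_weight x) inv).
  intros x z [Hl Hr] Hz. right.
  destruct (step_before_rhd x z Hr Hz) as
      [[u [l0 [r0 [-> [-> [_ [[Hl0 Hr0] [Hs _]]]]]]]] | [u [v [l [r [-> [-> [HA|HB]]]]]]]].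
  - exists (u ++ r0). split; [reflexivity|]. split; [split; counts|].
    apply shrinks_end_measure; exact Hs.
  - exists (u ++ r ++ v). split; [reflexivity|].
    split; [|apply A_step_end_measure; exact HA].
    apply A_rule_props in HA as [[Hll Hlr] [[Hrl Hrr] _]]. split; counts.
  - exfalso. apply B_rule_props in HB as [[l0 [r0 [-> _]]] _]. counts.
Qed.

(** Words x ⊳ with one ⊲ in x, whose value reaches a stop after j Collatz
    steps: right-end rules bring the stop closer, A and B keep the value. *)
Lemma sn_bracketed (j : nat) (x : word) :
  cnt isl x = 1 -> cnt isr x = 0 -> stop rho (traj (wval 0 x) j) -> sn (system D) (x ++ [rhd]).
Proof.
  revert x. induction j as [j IHj] using lt_wf_ind.
  enough (H : forall x, (cnt isl x = 1 /\ cnt isr x = 0 /\ stop rho (traj (wval 0 x) j)) ->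
                        sn (system D) (x ++ [rhd])) by (intros x ? ? ?; apply H; auto).
  apply (sn_by_lex_measure _ (fun x => x ++ [rhd]) _ (cnt istern) inv).
  intros x z [Hl [Hr Hj]] Hz.
  destruct (step_before_rhd x z Hr Hz) as
      [[u [l0 [r0 [-> [-> [[Hl0 Hr0] [[Hl0' Hr0'] [_ Hsim]]]]]]]] | [u [v [l [r [-> [-> HAB]]]]]]].
  - left. assert (Ha : 1 <= wval 0 u) by (apply wval_pos; counts).
    destruct (Hsim _ Ha) as [k [Hk [Hval Hfree]]].
    rewrite wval_app in Hj.
    assert (Hkj : k <= j).
    { destruct (Nat.le_gt_cases k j) as [?|Hlt]; [assumption|].
      exfalso. exact (Hfree j Hlt Hj). }
    apply (IHj (j - k)); [lia | counts | counts |].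
    rewrite wval_app, Hval, traj_add. replace (j - k + k) with j by lia. exact Hj.
  - right. exists (u ++ r ++ v). split; [reflexivity|]. split; [|apply AB_step_decreases; exact HAB].
    cbv beta. rewrite (wval_context 0 u v l r) by (apply AB_value; exact HAB).
    destruct HAB as [HA|HB].
    + apply A_rule_props in HA as [[? ?] [[? ?] _]]. repeat split; [counts | counts | exact Hj].
    + apply B_rule_props in HB as [[l0 [r0 [-> [-> [? ?]]]]] [? [? _]]].
      repeat split; [counts | counts | exact Hj].
Qed.

(** Words x ⊳ with x free of ⊳: split at the last ⊲ of x. *)
Lemma sn_rhd_terminated (Hstop : forall n, 1 <= n -> exists j, stop rho (traj n j)) (x : word) :
  cnt isr x = 0 -> sn (system D) (x ++ [rhd]).
Proof.
  intros Hx. destruct (Nat.eq_dec (cnt isl x) 0) as [Hl|Hl].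
  - apply sn_unmarked_rhd. split; assumption.
  - destruct (last_split isl lhd x isl_eq ltac:(lia)) as [p [q [-> Hq]]].
    replace ((p ++ lhd :: q) ++ [rhd]) with (p ++ lhd :: (q ++ [rhd])) by word_eq.
    apply sn_app_lhd; [exact system_lhd_local | apply sn_without_rhd; counts | counts |].
    destruct (Hstop (wval 0 (lhd :: q))) as [j Hj]; [apply wval_pos; simpl; lia|].
    apply (sn_bracketed j (lhd :: q)); [counts | counts | exact Hj].
Qed.

(** General words: split at the first ⊳. *)
Lemma sn_system (Hstop : forall n, 1 <= n -> exists j, stop rho (traj n j)) (w : word) :
  sn (system D) w.
Proof.
  induction w as [w IH] using (induction_ltof1 _ (@length sym)).
  destruct (Nat.eq_dec (cnt isr w) 0) as [Hr|Hr]; [apply sn_without_rhd; exact Hr|].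
  destruct (first_split isr rhd w isr_eq ltac:(lia)) as [x [y [-> Hx]]].
  apply sn_app_rhd; [exact system_rhd_local | exact Hx | apply sn_rhd_terminated; auto |].
  apply IH. unfold ltof. rewrite length_app. simpl. lia.
Qed.

Theorem terminating_of_hits : every_nonconv_hits rho -> terminating (system D).
Proof.
  intros Hhits. apply terminating_of_sn, sn_system. intros n Hn.
  destruct (classic (exists k, traj n k = 1)) as [[k Hk]|Hconv]; [exists k; left; exact Hk|].
  destruct (Hhits n Hn) as [k Hk]; [intros k Hk; apply Hconv; eauto|].
  exists k; right; exact Hk.
Qed.

End Termination.

(** * An infinite rewrite sequence from a trajectory avoiding stops *)

(** A right-hand side that A and B turn back into binary digits: binary, or
    a ternary digit followed by binary digits. *)
Definition nearly_binary (r0 : word) : Prop :=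
  bins r0 \/ exists t s, r0 = t :: s /\ istern t = true /\ bins s.

Definition covers (rho : nat) (D : srs) : Prop :=
  forall q, bins q -> avoids rho (wval 1 q) ->
    exists q0 l0 r0, In (l0 ++ [rhd], r0 ++ [rhd]) D /\ q = q0 ++ l0 /\ nearly_binary r0.

Section NonTermination.

Variables (rho : nat) (D : srs).
Hypothesis HD : Forall (right_end_rule rho) D.
Hypothesis HC : covers rho D.

Definition avoiding_word (w : word) : Prop :=
  exists q, w = lhd :: q ++ [rhd] /\ bins q /\ avoids rho (wval 1 q).

Lemma avoids_traj (n k : nat) : avoids rho n -> avoids rho (traj n k).
Proof. intros H j. rewrite traj_add. apply H. Qed.

(** One right-end step followed by absorption of its ternary digit leads from
    an avoiding word to another one. *)
Lemma avoiding_word_progress (w : word) : avoiding_word w ->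
  exists w1 w2, step (system D) w w1 /\ clos_refl_trans_1n _ (step (system D)) w1 w2 /\
    avoiding_word w2.
Proof.
  intros [q [-> [Hq Hav]]].
  destruct (HC q Hq Hav) as [q0 [l0 [r0 [Hin [-> Hr0]]]]].
  destruct (proj1 (Forall_forall _ _) HD _ Hin) as [l1 [r1 [E [_ [_ [_ Hsim]]]]]].
  injection E as E1 E2. apply app_inj_tail in E1 as [<- _]. apply app_inj_tail in E2 as [<- _].
  apply Forall_app in Hq as [Hq0 _].
  destruct (Hsim (wval 1 q0)) as [k [_ [Hval _]]]; [apply wval_pos; lia|].
  assert (Hav' : avoids rho (wval 1 (q0 ++ r0))).
  { rewrite wval_app, Hval. apply avoids_traj. rewrite <- wval_app. exact Hav. }
  assert (Hs1 : step (system D) (lhd :: (q0 ++ l0) ++ [rhd]) (lhd :: q0 ++ r0 ++ [rhd])).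
  { apply (step_intro _ (l0 ++ [rhd]) (r0 ++ [rhd]) (lhd :: q0) []);
      [apply in_or_app; auto | word_eq | word_eq]. }
  destruct Hr0 as [Hr0 | [t [s [-> [Ht Hs]]]]].
  - exists (lhd :: q0 ++ r0 ++ [rhd]), (lhd :: q0 ++ r0 ++ [rhd]).
    split; [exact Hs1|]. split; [apply rt1n_refl|].
    exists (q0 ++ r0). split; [word_eq|]. split; [apply Forall_app; auto | exact Hav'].
  - destruct (absorb_ternary _ (system_incl_A D) (system_incl_B D) q0 t s Hq0 Ht Hs)
      as [q' [Hq' [Hv Hst]]].
    exists (lhd :: q0 ++ t :: s ++ [rhd]), (lhd :: q' ++ [rhd]).
    split; [exact Hs1|]. split; [exact Hst|].
    exists q'. split; [reflexivity|]. split; [exact Hq'|]. rewrite Hv. exact Hav'.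
Qed.

Theorem hits_of_terminating : terminating (system D) -> every_nonconv_hits rho.
Proof.
  intros Hterm n Hn Hnc. apply NNPP. intros Hno.
  destruct (binary_encoding n Hn) as [q [Hq Hv]].
  apply (not_terminating_of_progress _ avoiding_word avoiding_word_progress
           (lhd :: q ++ [rhd])); [|exact Hterm].
  exists q. split; [reflexivity|]. split; [exact Hq|].
  rewrite Hv. intros j [H1 | H2]; [exact (Hnc j H1) | apply Hno; eauto].
Qed.

End NonTermination.

Theorem system_terminating_iff (rho : nat) (D : srs) :
  Forall (right_end_rule rho) D -> covers rho D ->
  (terminating (system D) <-> every_nonconv_hits rho).
Proof.
  intros HD HC. split; [apply hits_of_terminating | apply terminating_of_hits]; auto.
Qed.

(** * The four concrete systems *)

Lemma collatz_half (n k : nat) : n = 2 * k -> collatz n = k.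
Proof. intros ->. unfold collatz. rewrite Nat.even_even, Nat.mul_comm, Nat.div_mul; lia. Qed.

Lemma collatz_triple (n k : nat) : n = 2 * k + 1 -> collatz n = 6 * k + 4.
Proof. intros ->. unfold collatz. rewrite Nat.even_odd. lia. Qed.

Ltac mod4 :=
  match goal with
  | |- context [?n mod 4] => idtac
  | H : context [?n mod 4] |- _ => revert H
  end;
  match goal with |- context [?n mod 4] =>
    pose proof (Nat.div_mod n 4 ltac:(lia)); pose proof (Nat.mod_upper_bound n 4 ltac:(lia))
  end; lia.

Lemma wval_mod4 (a : nat) (b1 b0 : sym) : isbin b1 = true -> isbin b0 = true ->
  wval a [b1; b0] mod 4 = wval 0 [b1; b0].
Proof.
  intros H1 H0. destruct b1, b0; try discriminate; unfold wval; cbn [fold_left dstep]; mod4.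
Qed.

Lemma binary_avoiding_ends (rho : nat) (q : word) : bins q -> avoids rho (wval 1 q) ->
  exists q' b1 b0, q = q' ++ [b1; b0] /\ isbin b1 = true /\ isbin b0 = true /\
    wval 0 [b1; b0] <> rho.
Proof.
  intros Hq Hav.
  destruct q as [|b0 q1] using rev_ind; [exfalso; apply (Hav 0); left; reflexivity|].
  apply Forall_app in Hq as [Hq1 Hb0]. inversion Hb0 as [|? ? Hb0' _]; subst.
  destruct q1 as [|b1 q'] using rev_ind.
  - (* the values 2 and 3 reach 1 *)
    exfalso. destruct b0; try discriminate; [apply (Hav 1) | apply (Hav 7)]; left; reflexivity.
  - apply Forall_app in Hq1 as [_ Hb1]. inversion Hb1 as [|? ? Hb1' _]; subst.
    exists q', b1, b0. split; [word_eq|]. split; [exact Hb1'|]. split; [exact Hb0'|].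
    intros E. apply (Hav 0). right. unfold traj; simpl.
    replace ((q' ++ [b1]) ++ [b0]) with (q' ++ [b1; b0]) by word_eq.
    rewrite wval_app. rewrite <- E. apply wval_mod4; assumption.
Qed.

Lemma simulates_one_step (rho : nat) (l0 r0 : word) :
  (forall a, 1 <= a -> ~ stop rho (wval a l0) /\ wval a r0 = collatz (wval a l0)) ->
  simulates rho l0 r0.
Proof.
  intros H a Ha. destruct (H a Ha) as [Hs Hv]. exists 1.
  split; [lia|]. split; [exact Hv|]. intros j Hj. replace j with 0 by lia. exact Hs.
Qed.

Lemma simulates_two_steps (rho : nat) (l0 r0 : word) :
  (forall a, 1 <= a -> ~ stop rho (wval a l0) /\ ~ stop rho (collatz (wval a l0)) /\
     wval a r0 = collatz (collatz (wval a l0))) ->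
  simulates rho l0 r0.
Proof.
  intros H a Ha. destruct (H a Ha) as [Hs0 [Hs1 Hv]]. exists 2.
  split; [lia|]. split; [exact Hv|]. intros j Hj.
  destruct j as [|[|j]]; [exact Hs0 | exact Hs1 | lia].
Qed.

Ltac not_stop := unfold stop; intros [?|?]; [lia | mod4].

Lemma right_end_DE1 : right_end_rule 2 DE1.
Proof.
  exists [z2; z2], [z2]. repeat split; [left; simpl; lia|].
  apply simulates_one_step. intros a Ha. unfold wval; cbn [fold_left dstep].
  split; [not_stop | rewrite (collatz_half _ (2 * a)) by lia; lia].
Qed.

Lemma right_end_DE2 : right_end_rule 0 DE2.
Proof.
  exists [o2; z2], [o2]. repeat split; [left; simpl; lia|].
  apply simulates_one_step. intros a Ha. unfold wval; cbn [fold_left dstep].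
  split; [not_stop | rewrite (collatz_half _ (2 * a + 1)) by lia; lia].
Qed.

Lemma right_end_DE3 (rho : nat) : rho <> 1 -> rho <> 3 -> right_end_rule rho DE3.
Proof.
  intros H1 H3. exists [o2], [t3; z2]. repeat split.
  - right. split; [reflexivity|]. split; [exists []; reflexivity | exists [t3]; reflexivity].
  - apply simulates_one_step. intros a Ha. unfold wval; cbn [fold_left dstep].
    split; [not_stop | rewrite (collatz_triple _ a) by lia; lia].
Qed.

Lemma right_end_DO1 (rho : nat) : rho <> 0 -> rho <> 2 -> right_end_rule rho DO1.
Proof.
  intros H0 H2. exists [z2], []. repeat split; [left; simpl; lia|].
  apply simulates_one_step. intros a Ha. unfold wval; cbn [fold_left dstep].
  split; [not_stop | rewrite (collatz_half _ a) by lia; lia].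
Qed.

Lemma right_end_DO2 : right_end_rule 3 DO2.
Proof.
  exists [z2; o2], [o3; z2]. repeat split; [left; simpl; lia|].
  apply simulates_two_steps. intros a Ha. unfold wval; cbn [fold_left dstep].
  rewrite (collatz_triple _ (2 * a)) by lia.
  split; [not_stop|]. split; [not_stop|]. rewrite (collatz_half _ (6 * a + 2)) by lia; lia.
Qed.

Lemma right_end_DO3 : right_end_rule 1 DO3.
Proof.
  exists [o2; o2], [t3; o2]. repeat split; [left; simpl; lia|].
  apply simulates_two_steps. intros a Ha. unfold wval; cbn [fold_left dstep].
  rewrite (collatz_triple _ (2 * a + 1)) by lia.
  split; [not_stop|]. split; [not_stop|]. rewrite (collatz_half _ (6 * a + 5)) by lia; lia.
Qed.

Ltac cover_with q0 l0 r0 :=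
  exists q0, l0, r0; split; [simpl; tauto|]; split; [word_eq|];
  first [left; solve [repeat constructor]
        | right; do 2 eexists; split; [reflexivity | split; [reflexivity | repeat constructor]]].

Lemma covers_C0 : covers 0 [DE2; DE3].
Proof.
  intros q Hq Hav.
  destruct (binary_avoiding_ends 0 q Hq Hav) as [q' [b1 [b0 [-> [Hb1 [Hb0 Hne]]]]]].
  destruct b1, b0; try discriminate; simpl in Hne; [congruence | | |].
  - cover_with (q' ++ [z2]) [o2] [t3; z2].
  - cover_with q' [o2; z2] [o2].
  - cover_with (q' ++ [o2]) [o2] [t3; z2].
Qed.

Lemma covers_C2 : covers 2 [DE1; DE3].
Proof.
  intros q Hq Hav.
  destruct (binary_avoiding_ends 2 q Hq Hav) as [q' [b1 [b0 [-> [Hb1 [Hb0 Hne]]]]]].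
  destruct b1, b0; try discriminate; simpl in Hne; [| | congruence |].
  - cover_with q' [z2; z2] [z2].
  - cover_with (q' ++ [z2]) [o2] [t3; z2].
  - cover_with (q' ++ [o2]) [o2] [t3; z2].
Qed.

Lemma covers_T1 : covers 1 [DO1; DO3].
Proof.
  intros q Hq Hav.
  destruct (binary_avoiding_ends 1 q Hq Hav) as [q' [b1 [b0 [-> [Hb1 [Hb0 Hne]]]]]].
  destruct b1, b0; try discriminate; simpl in Hne; [| congruence | |].
  - cover_with (q' ++ [z2]) [z2] (@nil sym).
  - cover_with (q' ++ [o2]) [z2] (@nil sym).
  - cover_with q' [o2; o2] [t3; o2].
Qed.

Lemma covers_T3 : covers 3 [DO1; DO2].
Proof.
  intros q Hq Hav.
  destruct (binary_avoiding_ends 3 q Hq Hav) as [q' [b1 [b0 [-> [Hb1 [Hb0 Hne]]]]]].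
  destruct b1, b0; try discriminate; simpl in Hne; [| | | congruence].
  - cover_with (q' ++ [z2]) [z2] (@nil sym).
  - cover_with q' [z2; o2] [o3; z2].
  - cover_with (q' ++ [o2]) [z2] (@nil sym).
Qed.

Theorem mainTheorem15 :
  (terminating (srs_remove C_srs DE1) <-> every_nonconv_hits 0) /\
  (terminating (srs_remove C_srs DE2) <-> every_nonconv_hits 2) /\
  (terminating (srs_remove T_srs DO2) <-> every_nonconv_hits 1) /\
  (terminating (srs_remove T_srs DO3) <-> every_nonconv_hits 3).
Proof.
  split; [|split; [|split]].
  - change (srs_remove C_srs DE1) with (system [DE2; DE3]).
    apply system_terminating_iff; [|exact covers_C0].
    repeat apply Forall_cons; [exact right_end_DE2 | apply right_end_DE3; lia | apply Forall_nil].
  - change (srs_remove C_srs DE2) with (system [DE1; DE3]).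
    apply system_terminating_iff; [|exact covers_C2].
    repeat apply Forall_cons; [exact right_end_DE1 | apply right_end_DE3; lia | apply Forall_nil].
  - change (srs_remove T_srs DO2) with (system [DO1; DO3]).
    apply system_terminating_iff; [|exact covers_T1].
    repeat apply Forall_cons; [apply right_end_DO1; lia | exact right_end_DO3 | apply Forall_nil].
  - change (srs_remove T_srs DO3) with (system [DO1; DO2]).
    apply system_terminating_iff; [|exact covers_T3].
    repeat apply Forall_cons; [apply right_end_DO1; lia | exact right_end_DO2 | apply Forall_nil].
Qed.
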